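(* Let $\sigma$ be a permutation of $[n]$ and let $T_\sigma=\Psi(\sigma)$. Then $\mathrm{inv}(\sigma)=\mathrm{inv}(T_\sigma)$, $\mathrm{RLmin}(\sigma)=|R_{T_\sigma}|$, and $\mathrm{IDes}(\sigma)=\mathrm{IDes}(T_\sigma)$.
   Context: The map $\Psi$ sends a word $\pi$ of distinct integers to an increasing binary tree: $\Psi(\emptyset)=\emptyset$; otherwise write $\pi=\sigma\, i\,\tau$ with $i$ the least letter, and let $\Psi(\pi)$ have root $i$, left subtree $\Psi(\sigma)$, right subtree $\Psi(\tau)$. For a permutation $\sigma=\sigma_1\cdots\sigma_n$: $\mathrm{inv}(\sigma)$ is the number of pairs $i<j$ with $\sigma_i>\sigma_j$; $\mathrm{RLmin}(\sigma)$ is the number of $\sigma_i$ with $\sigma_j>\sigma_i$ for all $j>i$; $\mathrm{IDes}(\sigma)=\mathrm{Des}(\sigma^{-1})$, the set of $i\in[n-1]$ such that $i+1$ appears to the left of $i$ in $\sigma$. For an increasing binary tree $T$ on $[n]$ (root labeled $1$): an inversion of $T$ is a pair of vertices $(i,j)$ with $i>j$ such that either $j$ lies to the right of the path from the root $1$ to $i$, or $j$ is on the path from the root to $i$ and the left child of $j$ is on this path. $\mathrm{inv}(T)$ is the number of inversions of $T$; $\mathrm{IDes}(T)$ is the set of $i-1$ such that $(i,i-1)$ is an inversion of $T$; $R_T$ is the set of vertices of $T$ that do not belong to any left subtree of $T$ (i.e. the root together with the vertices reached from it by moving only to right children). *)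

From mathcomp Require Import all_boot.
Set Implicit Arguments. Unset Strict Implicit. Unset Printing Implicit Defensive.

Inductive btree : Type := Leaf | Node of btree & nat & btree.

Definition seqmin (s : seq nat) : nat := foldr minn (head 0 s) s.

(* Psi(pi): root = least letter i, left subtree Psi(sigma), right Psi(tau),
   where pi = sigma i tau.  Fuel = size of the word (structural recursion). *)
Fixpoint psi_aux (fuel : nat) (s : seq nat) : btree :=
  match fuel with
  | 0 => Leaf
  | f.+1 =>
    if s is [::] then Leaf else
    let m := seqmin s in
    let k := index m s in
    Node (psi_aux f (take k s)) m (psi_aux f (drop k.+1 s))
  end.

Definition Psi (s : seq nat) : btree := psi_aux (size s) s.

Definition inv_word (s : seq nat) : nat :=
  \sum_(i < size s) \sum_(j < size s) ((i < j) && (nth 0 s j < nth 0 s i)).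

Definition RLmin_word (s : seq nat) : nat :=
  \sum_(i < size s) all (fun y => nth 0 s i < y) (drop i.+1 s).

(* IDes(s) = Des(s^{-1}): the i in [n-1] such that i+1 appears left of i. *)
Definition IDes_word (s : seq nat) : pred nat :=
  fun i => (0 < i < size s) && (index i.+1 s < index i s).

Fixpoint labels (t : btree) : seq nat :=
  match t with Leaf => [::] | Node l a r => labels l ++ a :: labels r end.

(* address of the vertex labelled i: sequence of steps from the root,
   false = go to left child, true = go to right child *)
Fixpoint addr (t : btree) (i : nat) : option (seq bool) :=
  match t with
  | Leaf => None
  | Node l a r =>
    if a == i then Some [::] else
    match addr l i with
    | Some p => Some (false :: p)
    | None => omap (cons true) (addr r i)
    end
  end.

(* q (address of j) lies to the right of the path from the root to the vertex
   with address p: j is not on the path, and it is in the right subtree of some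
   vertex v of the path at depth k, where the path does not continue to the
   right child of v. *)
Definition right_of_path (p q : seq bool) : bool :=
  has (fun k => [&& take k q == take k p, nth false q k &
                    (size p <= k) || ~~ nth true p k]) (iota 0 (size q)).

(* q is on the path to p and the left child of (the vertex at) q is on the path *)
Definition on_path_left (p q : seq bool) : bool :=
  [&& take (size q) p == q, size q < size p & ~~ nth true p (size q)].

Definition tinv_pair (t : btree) (i j : nat) : bool :=
  (j < i) &&
  match addr t i, addr t j with
  | Some p, Some q => right_of_path p q || on_path_left p q
  | _, _ => false
  end.

Definition inv_tree (t : btree) : nat :=
  \sum_(i <- labels t) \sum_(j <- labels t) tinv_pair t i j.

Definition IDes_tree (t : btree) : pred nat :=
  fun k => (k.+1 \in labels t) && tinv_pair t k.+1 k.

(* R_T: vertices not in any left subtree (address uses only right steps) *)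
Definition R_T (t : btree) : seq nat :=
  [seq i <- labels t | if addr t i is Some p then all id p else false].

From mathcomp Require Import all_boot zify.
Set Implicit Arguments. Unset Strict Implicit. Unset Printing Implicit Defensive.

(* Psi puts the least letter m of s = s' m s'' at the root above Psi s' and
   Psi s'', so the in-order reading of Psi s is s itself.  For vertices i, j of
   a tree with addresses p, q, the condition "j lies right of the path to i, or
   on it with the path turning left at j" says exactly that j follows i in
   in-order; hence the inversions and inverse descents of a tree are those of
   its in-order word.  Finally the right-to-left minima of s' m s'' are m and
   those of s'', just as R_T is the root followed by R_T of the right subtree. *)


Lemma foldr_minn_mem a s : foldr minn a s \in a :: s.
Proof.
elim: s => [|x s IHs] /=; first exact: mem_head.
rewrite /minn; case: ifP => _; first by rewrite !inE eqxx orbT.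
by move: IHs; rewrite !inE => /orP[|] ->; rewrite ?orbT.
Qed.

Lemma foldr_minn_le a s y : y \in a :: s -> foldr minn a s <= y.
Proof.
elim: s => [|x s IHs] /=; first by rewrite inE => /eqP ->.
rewrite !inE geq_min => /or3P[ya|/eqP->|ys]; last first.
- by rewrite IHs ?orbT // inE ys orbT.
- by rewrite leqnn.
- by rewrite IHs ?orbT // inE ya.
Qed.

Lemma seqmin_mem s : s != [::] -> seqmin s \in s.
Proof.
case: s => // x s _; have := foldr_minn_mem x (x :: s).
by rewrite /seqmin /= in_cons => /orP[/eqP->|]; rewrite ?mem_head.
Qed.

Lemma seqmin_le s y : y \in s -> seqmin s <= y.
Proof. by case: s => // x s ys; apply: foldr_minn_le; rewrite inE ys orbT. Qed.

Definition min_prefix (s : seq nat) : seq nat := take (index (seqmin s) s) s.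
Definition min_suffix (s : seq nat) : seq nat := drop (index (seqmin s) s).+1 s.

Lemma split_seqmin s : s != [::] -> s = min_prefix s ++ seqmin s :: min_suffix s.
Proof.
move=> /seqmin_mem ms; rewrite -{1}(cat_take_drop (index (seqmin s) s) s).
by rewrite (drop_nth (seqmin s)) ?index_mem // nth_index.
Qed.

Lemma size_min_affixes s : s != [::] ->
  size (min_prefix s) < size s /\ size (min_suffix s) < size s.
Proof.
move=> s0; have := congr1 size (split_seqmin s0).
rewrite size_cat /= => ->; lia.
Qed.

Lemma psi_aux_node f s : s != [::] ->
  psi_aux f.+1 s = Node (psi_aux f (min_prefix s)) (seqmin s) (psi_aux f (min_suffix s)).
Proof. by case: s. Qed.

Lemma psi_aux_fuel f g s : size s <= f -> size s <= g -> psi_aux f s = psi_aux g s.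
Proof.
elim: f g s => [|f IHf] [|g] s; case: (altP (s =P [::])) => [-> //|s0];
  rewrite ?leqn0 ?size_eq0 ?(negbTE s0) // => sf sg.
have [ltp lts] := size_min_affixes s0.
by rewrite !psi_aux_node // !(IHf g) // -ltnS (leq_trans _ sf, leq_trans _ sg).
Qed.

Lemma Psi_node s : s != [::] ->
  Psi s = Node (Psi (min_prefix s)) (seqmin s) (Psi (min_suffix s)).
Proof.
move=> s0; have [n sn] : exists n, size s = n.+1 by case: s s0 => // x s; exists (size s).
have [ltp lts] := size_min_affixes s0.
by rewrite /Psi sn psi_aux_node //; congr Node; apply: psi_aux_fuel; rewrite // -ltnS -sn.
Qed.

Lemma Psi_ind (P : seq nat -> Prop) : P [::] ->
  (forall s, s != [::] -> P (min_prefix s) -> P (min_suffix s) -> P s) ->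
  forall s, P s.
Proof.
move=> P0 Pnode s; have [n] := ubnP (size s); elim: n s => // n IHn s /ltnSE sn.
case: (altP (s =P [::])) => [-> //|s0]; have [ltp lts] := size_min_affixes s0.
by apply: Pnode => //; apply: IHn; apply: leq_trans sn.
Qed.

Lemma labels_Psi s : labels (Psi s) = s.
Proof.
by elim/Psi_ind: s => // s s0 IHp IHs; rewrite Psi_node //= IHp IHs -split_seqmin.
Qed.

Definition inorder_lt (p q : seq bool) : bool := right_of_path p q || on_path_left p q.

Lemma inorder_lt0s c q : inorder_lt [::] (c :: q) = c.
Proof.
rewrite /inorder_lt /on_path_left andbF orbF /right_of_path /= andbT.
by case: c => //=; apply/negbTE/hasPn => -[|k].
Qed.

Lemma inorder_lts0 b p : inorder_lt (b :: p) [::] = ~~ b.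
Proof. by rewrite /inorder_lt /on_path_left take0. Qed.

Lemma inorder_lt_cons b c p q :
  inorder_lt (b :: p) (c :: q) = if b == c then inorder_lt p q else c.
Proof.
rewrite /inorder_lt /on_path_left /right_of_path /= eqseq_cons.
have -> : iota 1 (size q) = map S (iota 0 (size q)) by rewrite -(iotaDl 1).
rewrite has_map /preim /=.
by case: b; case: c => //=; rewrite ?orbF //; apply/negbTE/hasPn.
Qed.

Lemma isSome_addr t i : isSome (addr t i) = (i \in labels t).
Proof.
elim: t => //= l IHl a r IHr; rewrite mem_cat in_cons eq_sym.
case: eqP => //= _; case: (addr l i) IHl => [p|] <- //=.
by case: (addr r i) IHr => [?|] <-.
Qed.

Lemma addr_mem t i p : addr t i = Some p -> i \in labels t.
Proof. by rewrite -isSome_addr => ->. Qed.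

Lemma addr_nodeP l a r i p : addr (Node l a r) i = Some p ->
  [\/ i = a /\ p = [::],
      exists2 p', p = false :: p' & addr l i = Some p'
    | exists2 p', p = true :: p' & addr r i = Some p'].
Proof.
rewrite /=; case: eqP => [-> [<-]|_]; first by constructor 1.
case: (addr l i) => [p'|]; first by move=> [<-]; constructor 2; exists p'.
by case: (addr r i) => [p'|] //= [<-]; constructor 3; exists p'.
Qed.

Section InorderIndex.

Variables (l r : btree) (a : nat).
Hypothesis uniq_lar : uniq (labels (Node l a r)).

Lemma index_labels_left i : i \in labels l ->
  index i (labels (Node l a r)) = index i (labels l).
Proof. by move=> il; rewrite /= index_cat il. Qed.

Lemma index_labels_root : index a (labels (Node l a r)) = size (labels l).
Proof.
move: uniq_lar; rewrite /= cat_uniq /= => /and3P[_ /norP[al _] _].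
by rewrite index_cat (negbTE al) /= eqxx addn0.
Qed.

Lemma index_labels_right i : i \in labels r ->
  index i (labels (Node l a r)) = size (labels l) + (index i (labels r)).+1.
Proof.
move: uniq_lar; rewrite /= cat_uniq /= => /and3P[_ /norP[_ /hasPn rl] /andP[ar _]] ir.
have ai : a != i by apply: contraNneq ar => ->.
by rewrite index_cat (negbTE (rl i ir)) /= (negbTE ai).
Qed.

End InorderIndex.

Lemma inorder_lt_addr t i j p q : uniq (labels t) ->
  addr t i = Some p -> addr t j = Some q ->
  inorder_lt p q = (index i (labels t) < index j (labels t)).
Proof.
elim: t i j p q => // l IHl a r IHr i j p q U.
have [Ul Ur] : uniq (labels l) /\ uniq (labels r).
  by move: U; rewrite /= cat_uniq /= => /and3P[-> _ /andP[_ ->]].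
have index_lt_size k : k \in labels l -> index k (labels l) < size (labels l).
  by rewrite index_mem.
case/addr_nodeP=> [[-> ->]|[p' -> ip]|[p' -> ip]];
case/addr_nodeP=> [[-> ->]|[q' -> jq]|[q' -> jq]];
  rewrite ?inorder_lt0s ?inorder_lts0 ?inorder_lt_cons /= ?index_labels_root //
    ?(index_labels_left _ _ (addr_mem ip)) ?(index_labels_left _ _ (addr_mem jq))
    ?(index_labels_right U (addr_mem ip)) ?(index_labels_right U (addr_mem jq)).
- by rewrite ltnn.
- by have := index_lt_size _ (addr_mem jq); lia.
- lia.
- by have := index_lt_size _ (addr_mem ip); lia.
- exact: IHl.
- by have := index_lt_size _ (addr_mem ip); lia.
- lia.
- by have := index_lt_size _ (addr_mem jq); lia.
- by rewrite ltn_add2l ltnS; exact: IHr.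
Qed.

Lemma tinv_pair_index t i j : uniq (labels t) ->
  tinv_pair t i j =
    [&& j < i, i \in labels t, j \in labels t & index i (labels t) < index j (labels t)].
Proof.
move=> U; rewrite /tinv_pair -!isSome_addr; case: (j < i) => //=.
case ip: (addr t i) => [p|] //; case jq: (addr t j) => [q|] //=.
exact: inorder_lt_addr.
Qed.

Lemma inv_word_index s : uniq s ->
  inv_word s = \sum_(i <- s) \sum_(j <- s) ((j < i) && (index i s < index j s)).
Proof.
move=> Us; rewrite /inv_word (big_nth 0) big_mkord; apply: eq_bigr => a _.
rewrite (big_nth 0) big_mkord; apply: eq_bigr => b _.
by rewrite !index_uniq // andbC.
Qed.

Lemma inv_tree_inorder t : uniq (labels t) -> inv_tree t = inv_word (labels t).
Proof.
move=> U; rewrite inv_word_index // /inv_tree.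
apply: eq_big_seq => i il; apply: eq_big_seq => j jl.
by rewrite tinv_pair_index // il jl.
Qed.

Lemma IDes_tree_index t k : uniq (labels t) ->
  IDes_tree t k = [&& k.+1 \in labels t, k \in labels t & index k.+1 (labels t) < index k (labels t)].
Proof. by move=> U; rewrite /IDes_tree tinv_pair_index // ltnSn; case: (_ \in _). Qed.

Lemma IDes_word_iota n s k : perm_eq s (iota 1 n) ->
  IDes_word s k = [&& k.+1 \in s, k \in s & index k.+1 s < index k s].
Proof.
move=> sn; rewrite /IDes_word !(perm_mem sn) !mem_iota (perm_size sn) size_iota.
case: k => [|k] /=; first by rewrite andbF.
by rewrite andbA; congr (_ && _); lia.
Qed.

Lemma RLmin_word_cons x s : RLmin_word (x :: s) = all (fun y => x < y) s + RLmin_word s.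
Proof. by rewrite /RLmin_word /= big_ord_recl drop0. Qed.

Lemma RLmin_word_cat_min sg m t : all (fun y => m < y) sg -> all (fun y => m < y) t ->
  RLmin_word (sg ++ m :: t) = (RLmin_word t).+1.
Proof.
move=> sgm tm; elim: sg sgm => [|x sg IHsg] /=; first by rewrite RLmin_word_cons tm.
case/andP=> mx sgm; rewrite RLmin_word_cons IHsg // all_cat /= ltnNge (ltnW mx).
by rewrite andbF.
Qed.

Lemma R_T_node l a r : uniq (labels (Node l a r)) -> R_T (Node l a r) = a :: R_T r.
Proof.
rewrite /= cat_uniq /= => /and3P[_ /norP[al /hasPn rl] /andP[ar _]].
rewrite /R_T /= filter_cat /= eqxx /=.
have -> : [seq i <- labels l | if addr (Node l a r) i is Some p then all id p else false] = [::].
  apply/eqP; rewrite -[_ == _]negbK -has_filter; apply/hasPn => i il /=.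
  have ai : a != i by apply: contraNneq al => ->.
  by rewrite (negbTE ai); move: il; rewrite -isSome_addr; case: (addr l i).
congr (_ :: _); apply: eq_in_filter => i ir /=.
have ai : a != i by apply: contraNneq ar => ->.
have : ~~ isSome (addr l i) by rewrite isSome_addr rl.
by rewrite (negbTE ai); case: (addr l i) => //; case: (addr r i).
Qed.

Lemma RLmin_word_Psi s : uniq s -> RLmin_word s = size (R_T (Psi s)).
Proof.
elim/Psi_ind: s => [|s s0 _ IHs Us]; first by rewrite /RLmin_word big_ord0.
have U : uniq (labels (Psi s)) by rewrite labels_Psi.
have E := split_seqmin s0.
move: (Us); rewrite {1}E cat_uniq /= => /and4P[_ /norP[mp _] ms Us'].
have gt_min y : y \in s -> y != seqmin s -> seqmin s < y.
  by move=> ys ym; rewrite ltn_neqAle eq_sym ym seqmin_le.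
rewrite Psi_node // in U *; rewrite (R_T_node U) /= -IHs // {1}E.
rewrite RLmin_word_cat_min //; apply/allP => y ys; apply: gt_min.
- by rewrite E mem_cat ys.
- by apply: contraNneq mp => <-.
- by rewrite E mem_cat inE ys !orbT.
- by apply: contraNneq ms => <-.
Qed.

Theorem proposition4p4 (n : nat) (s : seq nat) :
  perm_eq s (iota 1 n) ->
  let T := Psi s in
  [/\ inv_word s = inv_tree T,
      RLmin_word s = size (R_T T) &
      IDes_word s =i IDes_tree T].
Proof.
move=> sn T; have Us : uniq s by rewrite (perm_uniq sn) iota_uniq.
have labelsT : labels T = s by apply: labels_Psi.
have UT : uniq (labels T) by rewrite labelsT.
split.
- by rewrite inv_tree_inorder labelsT.
- exact: RLmin_word_Psi Us.
- move=> k; change (IDes_word s k = IDes_tree T k).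
  by rewrite (IDes_word_iota k sn) IDes_tree_index // labelsT.
Qed.
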